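(* Let $A$ be an infinite set and let $\mathcal{L}$ be an algebra in the variety $V(\Omega(A))$ with more than one element. Then the following are equivalent: (1) $\mathcal{L}$ is simple; (2) $\mathcal{L}$ is subdirectly irreducible; (3) $\mathcal{L}$ is directly indecomposable; (4) the map $e:\Omega(A)\to\mathcal{L}$, $e(a)=\hat{a}^{\mathcal{L}}$, is an elementary embedding. Moreover, if $\mathcal{L}=\Omega(A)^{F}/Z$ is a limit reduced power of $\Omega(A)$, then (1)–(4) are also equivalent to: (5) $Z$ is an ultrafilter on the Boolean algebra $\{\emptyset\}\cup\bigcup F$.
   Context: For each $a\in A$ let $\hat{a}$ be a constant symbol, and for each $n\geq1$ and each $f:A^{n}\to A$ let $\hat{f}$ be an $n$-ary operation symbol. $\Omega(A)$ is the algebra with universe $A$ in which $\hat{a}$ is interpreted as $a$ and $\hat{f}$ as $f$; $V(\Omega(A))$ is the variety it generates. For a set $I$, $\Pi(I)$ is the lattice of partitions of $I$ (ordered by refinement, $\wedge$ = common refinement); for $f:I\to X$, $\Pi(f)$ is the partition of $I$ into nonempty fibers of $f$. For a filter $F$ on $\Pi(I)$, $\Omega(A)^{F}=\{f\in A^{I}:\Pi(f)\in F\}$ is a subalgebra of $\Omega(A)^{I}$, and $\{\emptyset\}\cup\bigcup F$ (where $\bigcup F$ is the set of all blocks of partitions in $F$) is a Boolean algebra of subsets of $I$. For a filter $Z$ on this Boolean algebra, $\Omega(A)^{F}/Z$ is the quotient of $\Omega(A)^{F}$ by the congruence $\{(f,g): \{i\in I:f(i)=g(i)\}\in Z\}$;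 such a quotient is called a limit reduced power of $\Omega(A)$. *)

From mathcomp Require Import all_boot.
From Stdlib Require List.
Set Implicit Arguments. Unset Strict Implicit. Unset Printing Implicit Defensive.

(* One constant symbol  Cst a  for each a : A, and one n-ary operation symbol
   Op n f  (of arity n.+1 >= 1) for each f : A^(n+1) -> A. *)
Inductive sym (A : Type) : Type :=
| Cst of A
| Op (n : nat) of (('I_n.+1 -> A) -> A).

Definition arity (A : Type) (s : sym A) : nat :=
  match s with Cst _ => 0 | Op n _ => n.+1 end.

Record alg (A : Type) := Alg {
  carrier :> Type;
  interp : forall s : sym A, ('I_(arity s) -> carrier) -> carrier }.

Arguments interp {A} c s _ : rename.

Definition Omega (A : Type) : alg A :=
  @Alg A A (fun s => match s return ('I_(arity s) -> A) -> A with
                     | Cst a => fun _ => a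
                     | Op n f => fun args => f args end).

Lemma I0_empty : 'I_0 -> False. Proof. by case. Qed.
Definition noargs (T : Type) (k : 'I_0) : T := False_rect T (I0_empty k).

Definition const_map (A : Type) (L : alg A) (a : A) : L :=
  interp L (Cst a) (@noargs L).

Inductive term (A : Type) : Type :=
| Var of nat
| App (s : sym A) of ('I_(arity s) -> term A).

Fixpoint eval (A : Type) (L : alg A) (v : nat -> L) (t : term A) : L :=
  match t with
  | Var i => v i
  | App s args => interp L s (fun k => eval v (args k))
  end.

Inductive form (A : Type) : Type :=
| FEq of term A & term A
| FNot of form A
| FAnd of form A & form A
| FEx of nat & form A.

Definition upd (T : Type) (v : nat -> T) (i : nat) (x : T) : nat -> T :=
  fun j => if j == i then x else v j.

Fixpoint sat (A : Type) (L : alg A) (v : nat -> L) (phi : form A) : Prop :=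
  match phi with
  | FEq t1 t2 => eval v t1 = eval v t2
  | FNot p => ~ sat v p
  | FAnd p q => sat v p /\ sat v q
  | FEx i p => exists x : L, sat (upd v i x) p
  end.

Definition elementary_embedding (A : Type) (L : alg A) (e : A -> L) : Prop :=
  forall (phi : form A) (v : nat -> A), sat (L := Omega A) v phi <-> sat (e \o v) phi.

(* L lies in the variety generated by Omega(A): it satisfies every identity
   valid in Omega(A) (Birkhoff: V(K) = Mod Id(K)). *)
Definition in_variety (A : Type) (L : alg A) : Prop :=
  forall t1 t2 : term A,
    (forall v : nat -> A, eval (L := Omega A) v t1 = eval (L := Omega A) v t2) ->
    forall w : nat -> L, eval w t1 = eval w t2.

Definition nontrivial (A : Type) (L : alg A) : Prop := exists x y : L, x <> y.
Definition trivial_alg (A : Type) (L : alg A) : Prop := forall x y : L, x = y.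

Definition infinite_type (T : Type) : Prop := forall l : list T, exists x, ~ List.In x l.

Definition surjective (X Y : Type) (f : X -> Y) : Prop := forall y, exists x, f x = y.

Definition hom (A : Type) (L M : alg A) (h : L -> M) : Prop :=
  forall s (args : 'I_(arity s) -> L), h (interp L s args) = interp M s (h \o args).

Definition prod_alg (A : Type) (I : Type) (B : I -> alg A) : alg A :=
  @Alg A (forall i, B i) (fun s args i => interp (B i) s (fun k => args k i)).

Definition prod2_alg (A : Type) (B C : alg A) : alg A :=
  @Alg A (B * C)%type
    (fun s args => (interp B s (fun k => (args k).1), interp C s (fun k => (args k).2))).

Definition congruence (A : Type) (L : alg A) (th : L -> L -> Prop) : Prop :=
  [/\ (forall x, th x x), (forall x y, th x y -> th y x),
      (forall x y z, th x y -> th y z -> th x z) &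
      (forall s (a1 a2 : 'I_(arity s) -> L), (forall k, th (a1 k) (a2 k)) ->
          th (interp L s a1) (interp L s a2))].

Definition simple_alg (A : Type) (L : alg A) : Prop :=
  nontrivial L /\
  forall th, congruence th -> (forall x y, th x y -> x = y) \/ (forall x y : L, th x y).

Definition subdirectly_irreducible (A : Type) (L : alg A) : Prop :=
  nontrivial L /\
  forall (I : Type) (B : I -> alg A) (h : L -> prod_alg B),
    hom h -> injective h -> (forall i, surjective (fun x => h x i)) ->
    exists i, injective (fun x => h x i) /\ surjective (fun x => h x i).

Definition directly_indecomposable (A : Type) (L : alg A) : Prop :=
  forall (B C : alg A) (h : L -> prod2_alg B C),
    hom h -> injective h -> surjective h -> trivial_alg B \/ trivial_alg C.

(* Partitions of I are represented by the corresponding equivalence relations;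
   refinement is inclusion of relations, common refinement is intersection. *)
Definition is_equiv (I : Type) (P : I -> I -> Prop) : Prop :=
  [/\ (forall i, P i i), (forall i j, P i j -> P j i) &
      (forall i j k, P i j -> P j k -> P i k)].

Definition kerP (I X : Type) (f : I -> X) : I -> I -> Prop := fun i j => f i = f j.

Definition partition_filter (I : Type) (F : (I -> I -> Prop) -> Prop) : Prop :=
  [/\ (forall P, F P -> is_equiv P), (exists P, F P),
      (forall P Q, F P -> is_equiv Q -> (forall i j, P i j -> Q i j) -> F Q) &
      (forall P Q, F P -> F Q -> F (fun i j => P i j /\ Q i j))].

Definition block_of (I : Type) (F : (I -> I -> Prop) -> Prop) (X : I -> Prop) : Prop :=
  exists P, F P /\ exists i, forall j, X j <-> P i j.

Definition inBA (I : Type) (F : (I -> I -> Prop) -> Prop) (X : I -> Prop) : Prop :=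
  (forall i, ~ X i) \/ block_of F X.

Definition BA_filter (I : Type) (F : (I -> I -> Prop) -> Prop) (Z : (I -> Prop) -> Prop) : Prop :=
  [/\ (forall X, Z X -> inBA F X), (exists X, Z X),
      (forall X Y, Z X -> inBA F Y -> (forall i, X i -> Y i) -> Z Y) &
      (forall X Y, Z X -> Z Y -> Z (fun i => X i /\ Y i))].

Definition proper_filter (I : Type) (Z : (I -> Prop) -> Prop) : Prop :=
  forall X, Z X -> exists i, X i.

Definition BA_ultrafilter (I : Type) (F : (I -> I -> Prop) -> Prop) (Z : (I -> Prop) -> Prop) : Prop :=
  [/\ BA_filter F Z, proper_filter Z &
      forall Z', BA_filter F Z' -> proper_filter Z' -> (forall X, Z X -> Z' X) ->
                 forall X, Z' X -> Z X].

Definition OmegaF (A I : Type) (F : (I -> I -> Prop) -> Prop) : Type :=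
  {f : I -> A | F (kerP f)}.

(* L = Omega(A)^F / Z, presented (up to isomorphism, by the first isomorphism
   theorem) as a surjective homomorphism h : Omega(A)^F -> L whose kernel is the
   congruence {(f,g) | [i | f i = g i] in Z}. *)
Definition limit_reduced_power_pres (A : Type) (L : alg A) (I : Type)
  (F : (I -> I -> Prop) -> Prop) (Z : (I -> Prop) -> Prop) (h : OmegaF A F -> L) : Prop :=
  [/\ partition_filter F, BA_filter F Z, surjective h,
      (forall f g : OmegaF A F, h f = h g <-> Z (fun i => sval f i = sval g i)) &
      (forall s (args : 'I_(arity s) -> OmegaF A F) (g : OmegaF A F),
         (forall i, sval g i = interp (Omega A) s (fun k => sval (args k) i)) ->
         h g = interp L s (fun k => h (args k)))].

From mathcomp Require Import all_boot.
From Stdlib Require Import ClassicalEpsilon FunctionalExtensionality ProofIrrelevance Classical.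
Set Implicit Arguments. Unset Strict Implicit. Unset Printing Implicit Defensive.

(* Every function on A is a fundamental operation of Omega(A); in particular so is the
   switching function s(x,y,u,v) = (if x = y then u else v), which makes V(Omega(A)) a
   discriminator variety.  For L in the variety, each of (1)-(4) is equivalent to s being the
   discriminator of L: identities of s turn a pair a <> b with s(a,b,u,v) <> v into a
   nontrivial congruence and into a nontrivial direct decomposition of L, while in a
   discriminator algebra every first-order formula compiles into a term that equals a0 exactly
   when the formula holds, existential quantifiers being eliminated by Skolem functions, which
   are again operations of Omega(A).  For a limit reduced power, s is the discriminator exactly
   when, for every element of the Boolean algebra, either it or its complement lies in Z. *)

Definition switch (A : Type) (x y u v : A) : A :=
  if excluded_middle_informative (x = y) then u else v.

Ltac case_switch := rewrite /switch; repeat match goal with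
  |- context[excluded_middle_informative ?P] => destruct (excluded_middle_informative P); simpl
  end; try congruence.

Definition switch_sym (A : Type) : sym A :=
  @Op A 3 (fun a => switch (a (@Ordinal 4 0 isT)) (a (@Ordinal 4 1 isT))
                           (a (@Ordinal 4 2 isT)) (a (@Ordinal 4 3 isT))).

Definition args4 (T : Type) (x y u v : T) (k : 'I_4) : T :=
  match val k with 0 => x | 1 => y | 2 => u | _ => v end.

Definition switchM (A : Type) (M : alg A) (x y u v : M) : M :=
  interp M (switch_sym A) (args4 x y u v).

Definition switch_term (A : Type) (x y u v : term A) : term A :=
  @App A (switch_sym A) (args4 x y u v).

Definition const_term (A : Type) (a : A) : term A := @App A (Cst a) (@noargs _).

Definition env5 (T : Type) (x0 x1 x2 x3 x4 : T) (n : nat) : T :=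
  match n with 0 => x0 | 1 => x1 | 2 => x2 | 3 => x3 | _ => x4 end.

Definition switch_discriminates (A : Type) (M : alg A) : Prop :=
  forall a b u v : M, a <> b -> switchM a b u v = v.

Lemma args4_map (T U : Type) (f : T -> U) x y u v :
  (fun k => f (args4 x y u v k)) = args4 (f x) (f y) (f u) (f v).
Proof. by apply: functional_extensionality => k; rewrite /args4 /=; case: (val k) => [|[|[|]]]. Qed.

Lemma eval_switch_term A (M : alg A) (w : nat -> M) x y u v :
  eval w (switch_term x y u v) = switchM (eval w x) (eval w y) (eval w u) (eval w v).
Proof. by rewrite /switch_term /switchM /=; rewrite args4_map. Qed.

Lemma eval_const_term A (M : alg A) (w : nat -> M) a : eval w (const_term a) = const_map M a.
Proof.
rewrite /const_term /const_map /=; congr (interp _ _ _).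
by apply: functional_extensionality => k; case: (I0_empty k).
Qed.

Lemma switchM_Omega A (x y u v : A) : switchM (M := Omega A) x y u v = switch x y u v.
Proof. by []. Qed.

Lemma switch_discriminates_Omega A : switch_discriminates (Omega A).
Proof. by move=> a b u v ab; rewrite switchM_Omega; case_switch. Qed.

Lemma sig_eq (T : Type) (P : T -> Prop) (x y : sig P) : sval x = sval y -> x = y.
Proof. by apply: eq_sig_hprop => ? ? ?; apply: proof_irrelevance. Qed.

Definition tuple_env (T : Type) n (d : T) (f : 'I_n -> T) (m : nat) : T :=
  if insub m is Some k then f k else d.

Lemma tuple_env_val T n (d : T) (f : 'I_n -> T) (k : 'I_n) : tuple_env d f (val k) = f k.
Proof. by rewrite /tuple_env valK. Qed.

(* Proves an identity in M by checking it in Omega(A), where each switch is decided by cases. *)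
Ltac transfer HV t1 t2 w :=
  have := HV t1 t2 _ w; rewrite ?eval_switch_term ?eval_const_term /=; apply;
  let v := fresh "v" in move=> v; rewrite ?eval_switch_term ?eval_const_term ?switchM_Omega /=;
  case_switch.

Section SwitchIdentities.

Variables (A : Type) (M : alg A).
Hypothesis HV : in_variety M.

Lemma switch_refl (x u v : M) : switchM x x u v = u.
Proof.
transfer HV (switch_term (Var A 0) (Var A 0) (Var A 1) (Var A 2)) (Var A 1) (env5 x u v v v).
Qed.

Lemma switch_const (x y u : M) : switchM x y u u = u.
Proof.
transfer HV (switch_term (Var A 0) (Var A 1) (Var A 2) (Var A 2)) (Var A 2) (env5 x y u u u).
Qed.

Lemma switch_diag (x y : M) : switchM x y x y = y.
Proof.
transfer HV (switch_term (Var A 0) (Var A 1) (Var A 0) (Var A 1)) (Var A 1) (env5 x y x y y).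
Qed.

Lemma switch_eq_branch (x y z : M) : switchM x y x z = switchM x y y z.
Proof.
transfer HV (switch_term (Var A 0) (Var A 1) (Var A 0) (Var A 2))
  (switch_term (Var A 0) (Var A 1) (Var A 1) (Var A 2)) (env5 x y z z z).
Qed.

Lemma switch_absorb_l (x y u v z : M) : switchM x y (switchM x y u v) z = switchM x y u z.
Proof.
transfer HV
  (switch_term (Var A 0) (Var A 1) (switch_term (Var A 0) (Var A 1) (Var A 2) (Var A 3)) (Var A 4))
  (switch_term (Var A 0) (Var A 1) (Var A 2) (Var A 4)) (env5 x y u v z).
Qed.

Lemma switch_absorb_r (x y u v z : M) : switchM x y u (switchM x y v z) = switchM x y u z.
Proof.
transfer HV
  (switch_term (Var A 0) (Var A 1) (Var A 2) (switch_term (Var A 0) (Var A 1) (Var A 3) (Var A 4)))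
  (switch_term (Var A 0) (Var A 1) (Var A 2) (Var A 4)) (env5 x y u v z).
Qed.

Lemma switch_recombine (x y u v : M) : switchM x y (switchM x y u v) (switchM x y v u) = u.
Proof.
transfer HV (switch_term (Var A 0) (Var A 1)
                (switch_term (Var A 0) (Var A 1) (Var A 2) (Var A 3))
                (switch_term (Var A 0) (Var A 1) (Var A 3) (Var A 2)))
  (Var A 2) (env5 x y u v v).
Qed.

Lemma switch_distinct_consts (a b : A) (u v : M) :
  a <> b -> switchM (const_map M a) (const_map M b) u v = v.
Proof.
move=> ab; transfer HV (switch_term (const_term a) (const_term b) (Var A 0) (Var A 1)) (Var A 1)
  (env5 u v v v v).
Qed.

Lemma switch_via_consts (a0 a1 : A) (x y u v : M) : a0 <> a1 ->
  switchM x y u v =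
  switchM (switchM x y (const_map M a1) (const_map M a0)) (const_map M a0) v u.
Proof.
move=> a01; transfer HV (switch_term (Var A 0) (Var A 1) (Var A 2) (Var A 3))
  (switch_term (switch_term (Var A 0) (Var A 1) (const_term a1) (const_term a0))
               (const_term a0) (Var A 3) (Var A 2)) (env5 x y u v v).
Qed.

Lemma switch_interp_l (x y z : M) s (args : 'I_(arity s) -> M) :
  switchM x y (interp M s args) z = switchM x y (interp M s (fun k => switchM x y (args k) z)) z.
Proof.
pose w m := match m with 0 => x | 1 => y | 2 => z | m.+3 => tuple_env z args m end.
have := @HV
  (switch_term (Var A 0) (Var A 1) (App (fun k : 'I_(arity s) => Var A (val k).+3)) (Var A 2))
  (switch_term (Var A 0) (Var A 1)
     (App (fun k : 'I_(arity s) => switch_term (Var A 0) (Var A 1) (Var A (val k).+3) (Var A 2)))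
     (Var A 2)) _ w.
rewrite !eval_switch_term /=.
have -> : (fun k : 'I_(arity s) => tuple_env z args (val k)) = args.
  by apply: functional_extensionality => k; rewrite tuple_env_val.
have -> : (fun k : 'I_(arity s) =>
            eval w (switch_term (Var A 0) (Var A 1) (Var A (val k).+3) (Var A 2))) =
          (fun k => switchM x y (args k) z).
  by apply: functional_extensionality => k; rewrite eval_switch_term /= tuple_env_val.
apply => v; rewrite ?eval_switch_term ?switchM_Omega /=; case_switch.
Qed.

Lemma switch_interp_r (x y z : M) s (args : 'I_(arity s) -> M) :
  switchM x y z (interp M s args) = switchM x y z (interp M s (fun k => switchM x y z (args k))).
Proof.
pose w m := match m with 0 => x | 1 => y | 2 => z | m.+3 => tuple_env z args m end.
have := @HV
  (switch_term (Var A 0) (Var A 1) (Var A 2) (App (fun k : 'I_(arity s) => Var A (val k).+3)))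
  (switch_term (Var A 0) (Var A 1) (Var A 2)
     (App (fun k : 'I_(arity s) => switch_term (Var A 0) (Var A 1) (Var A 2) (Var A (val k).+3))))
  _ w.
rewrite !eval_switch_term /=.
have -> : (fun k : 'I_(arity s) => tuple_env z args (val k)) = args.
  by apply: functional_extensionality => k; rewrite tuple_env_val.
have -> : (fun k : 'I_(arity s) =>
            eval w (switch_term (Var A 0) (Var A 1) (Var A 2) (Var A (val k).+3))) =
          (fun k => switchM x y z (args k)).
  by apply: functional_extensionality => k; rewrite eval_switch_term /= tuple_env_val.
apply => v; rewrite ?eval_switch_term ?switchM_Omega /=; case_switch.
Qed.

End SwitchIdentities.

Lemma simple_subdirectly_irreducible A (M : alg A) :
  simple_alg M -> subdirectly_irreducible M.
Proof.
move=> [nt Msimple]; split => // I B h hom_h inj_h surj_h.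
apply: NNPP => noninj; case: nt => x [y xy]; apply: xy; apply: inj_h.
apply: functional_extensionality_dep => i.
have kerP_cong : congruence (fun x y => h x i = h y i).
  split => [//|//|x1 x2 x3 -> //|s a1 a2 E].
  by rewrite !hom_h /=; congr (interp _ _ _); apply: functional_extensionality => k.
case: (Msimple _ kerP_cong) => [inj_i|]; last exact.
by case: noninj; exists i; split => // x1 x2 /inj_i.
Qed.

Lemma subdirectly_irreducible_directly_indecomposable A (M : alg A) :
  subdirectly_irreducible M -> directly_indecomposable M.
Proof.
move=> [[x0 _] Msi] B C h hom_h inj_h surj_h.
pose BC (b : bool) := if b then B else C.
pose h' x : prod_alg BC := fun b => if b as b' return BC b' then (h x).1 else (h x).2.
have hom_h' : hom h'.
  by move=> s args; apply: functional_extensionality_dep => -[]; rewrite /h' hom_h.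
have inj_h' : injective h'.
  move=> x y /[dup] /(f_equal (fun F => F true)) /= E1 /(f_equal (fun F => F false)) /= E2.
  by apply: inj_h; apply: injective_projections.
have surj_h' : forall b, surjective (fun x => h' x b).
  case=> y; [have [x hx] := surj_h (y, (h x0).2) | have [x hx] := surj_h ((h x0).1, y)];
  by exists x; rewrite /h' hx.
have [[] [inj_b _]] := Msi _ BC h' hom_h' inj_h' surj_h'; [right|left] => c c'.
- have [x hx] := surj_h ((h x0).1, c); have [x' hx'] := surj_h ((h x0).1, c').
  have xx' : x = x' by apply: inj_b; rewrite /h' hx hx'.
  by move: hx'; rewrite -xx' hx => -[].
- have [x hx] := surj_h (c, (h x0).2); have [x' hx'] := surj_h (c', (h x0).2).
  have xx' : x = x' by apply: inj_b; rewrite /h' hx hx'.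
  by move: hx'; rewrite -xx' hx => -[].
Qed.

Section Retract.

Variables (A : Type) (M : alg A) (r : M -> M).
Hypothesis r_idem : forall x, r (r x) = r x.

Definition retract_alg : alg A :=
  @Alg A {x : M | r x = x}
    (fun s args => exist _ (r (interp M s (fun k => sval (args k)))) (r_idem _)).

Definition retract (x : M) : retract_alg := exist _ (r x) (r_idem x).

Lemma retract_hom :
  (forall s args, r (interp M s args) = r (interp M s (r \o args))) -> hom retract.
Proof. by move=> r_interp s args; apply: sig_eq; rewrite /= r_interp. Qed.

End Retract.

Section Discriminator.

Variables (A : Type) (M : alg A).
Hypothesis HV : in_variety M.

Lemma simple_of_discriminates : nontrivial M -> switch_discriminates M -> simple_alg M.
Proof.
move=> nt disc; split => // th [th_refl _ _ th_interp].
case: (classic (exists x y, th x y /\ x <> y)) => [[x [y [xy x_y]]]|]; last first.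
  by move=> N; left => x y xy; apply: NNPP => x_y; apply: N; exists x, y.
right => u v; have := th_interp (switch_sym A) (args4 x x u v) (args4 x y u v).
rewrite -/(switchM x x u v) -/(switchM x y u v) (switch_refl HV) // disc //; apply.
by move=> k; rewrite /args4; case: (val k) => [|[|[|?]]].
Qed.

Variables a0 a1 : A.
Hypothesis a01 : a0 <> a1.

Lemma discriminates_at_consts (a b : M) :
  switchM a b (const_map M a1) (const_map M a0) = const_map M a0 ->
  forall u v, switchM a b u v = v.
Proof. by move=> E u v; rewrite (switch_via_consts HV _ _ _ _ a01) E (switch_refl HV). Qed.

Lemma discriminates_of_simple : simple_alg M -> switch_discriminates M.
Proof.
move=> [_ Msimple] a b u v ab; apply: discriminates_at_consts.
pose psi w := switchM a b w (const_map M a0).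
have psi_cong : congruence (fun x y => psi x = psi y).
  split => [//|//|x y z -> //|s args1 args2 E].
  rewrite /psi (switch_interp_l HV) [RHS](switch_interp_l HV); congr (switchM _ _ (interp _ _ _) _).
  exact: functional_extensionality.
case: (Msimple _ psi_cong) => [psi_inj|psi_const].
  by case: ab; apply: psi_inj; rewrite /psi (switch_eq_branch HV).
by have := psi_const (const_map M a1) (const_map M a0); rewrite /psi (switch_const HV).
Qed.

Lemma discriminates_of_directly_indecomposable :
  directly_indecomposable M -> switch_discriminates M.
Proof.
move=> Mdi a b u v ab; apply: discriminates_at_consts.
pose psi w := switchM a b w (const_map M a0).
pose chi w := switchM a b (const_map M a0) w.
have psi_idem x : psi (psi x) = psi x by rewrite /psi (switch_absorb_l HV).
have chi_idem x : chi (chi x) = chi x by rewrite /chi (switch_absorb_r HV).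
pose h x : prod2_alg (retract_alg psi_idem) (retract_alg chi_idem) :=
  (retract psi_idem x, retract chi_idem x).
have hom_h : hom h.
  have hom_psi := retract_hom psi_idem (switch_interp_l HV a b _).
  have hom_chi := retract_hom chi_idem (switch_interp_r HV a b _).
  by move=> s args; rewrite /h hom_psi hom_chi.
have inj_h : injective h.
  move=> x y Exy; have /= Epsi := congr1 (fun p => sval p.1) Exy.
  have /= Echi := congr1 (fun p => sval p.2) Exy.
  by rewrite -(switch_recombine HV a b x (const_map M a0))
             -(switch_recombine HV a b y (const_map M a0)) -/(psi x) -/(chi x) Epsi Echi.
have surj_h : surjective h.
  move=> [[p psi_p] [q chi_q]]; exists (switchM a b p q).
  congr pair; apply: sig_eq => /=.
    by rewrite -[RHS]psi_p /psi (switch_absorb_l HV).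
  by rewrite -[RHS]chi_q /chi (switch_absorb_r HV).
case: (Mdi _ _ h hom_h inj_h surj_h) => [psi_triv|chi_triv].
  have := f_equal sval (psi_triv (retract psi_idem (const_map M a0))
                                 (retract psi_idem (const_map M a1))).
  by rewrite /= /psi (switch_const HV) => <-.
case: ab; have /= chi_ab := f_equal sval (chi_triv (retract chi_idem a) (retract chi_idem b)).
have -> : a = switchM a b a (chi a) by rewrite /chi (switch_absorb_r HV) (switch_const HV).
by rewrite chi_ab /chi (switch_absorb_r HV) (switch_diag HV).
Qed.

End Discriminator.

Lemma discriminates_of_elementary_embedding A (M : alg A) (a0 : A) :
  elementary_embedding (@const_map A M) -> switch_discriminates M.
Proof.
move=> Mee a b u v ab; apply: NNPP => Nuv.
pose no_counterexample := FNot (FEx 0 (FEx 1 (FEx 2 (FEx 3 (FAnd (FNot (FEq (Var A 0) (Var A 1)))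
  (FNot (FEq (switch_term (Var A 0) (Var A 1) (Var A 2) (Var A 3)) (Var A 3)))))))).
have [+ _] := Mee no_counterexample (fun _ => a0); rewrite /= /upd /=; apply.
  by move=> [x [y [z [w []]]]] /= xy; case_switch.
by exists a, b, u, v; split; rewrite //= args4_map.
Qed.

Section ConstMap.

Variables (A : Type) (M : alg A).
Hypothesis HV : in_variety M.

Lemma const_map_hom : @hom A (Omega A) M (const_map M).
Proof.
move=> s args; pose w (_ : nat) := const_map M (interp (Omega A) s args).
have := @HV (const_term (interp (Omega A) s args)) (App (fun k => const_term (args k))) _ w.
rewrite eval_const_term /=.
have -> : (fun k => eval w (const_term (args k))) = const_map M \o args.
  by apply: functional_extensionality => k; rewrite eval_const_term.
by apply.
Qed.

Lemma const_map_inj : nontrivial M -> injective (const_map M).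
Proof.
move=> [x [y xy]] a b ab; apply: NNPP => a_b; apply: xy.
by rewrite -(switch_refl HV (const_map M a) x y) {2}ab (switch_distinct_consts HV).
Qed.

End ConstMap.

Lemma eval_hom A (L M : alg A) (h : L -> M) (v : nat -> L) (t : term A) :
  hom h -> eval (h \o v) t = h (eval v t).
Proof.
move=> hom_h; elim: t => [//|s args IH] /=; rewrite hom_h.
by congr (interp _ _ _); apply: functional_extensionality.
Qed.

Fixpoint var_bound A (t : term A) : nat :=
  match t with Var i => i.+1 | App s args => \max_(k < arity s) var_bound (args k) end.

Fixpoint tsubst A (i : nat) (u : term A) (t : term A) : term A :=
  match t with
  | Var j => if j == i then u else Var A j
  | App s args => App (fun k => tsubst i u (args k))
  end.

Lemma eval_var_bound A (M : alg A) (t : term A) (v v' : nat -> M) :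
  (forall m, m < var_bound t -> v m = v' m) -> eval v t = eval v' t.
Proof.
elim: t v v' => [n|s args IH] v v' vv' /=; first exact: vv'.
congr (interp _ _ _); apply: functional_extensionality => k; apply: IH => m lt; apply: vv'.
by apply: leq_trans lt _; exact: (leq_bigmax k).
Qed.

Lemma eval_tsubst A (M : alg A) (t u : term A) i (v : nat -> M) :
  eval v (tsubst i u t) = eval (upd v i (eval v u)) t.
Proof.
elim: t => [n|s args IH] /=; first by rewrite /upd; case: (n == i).
by congr (interp _ _ _); apply: functional_extensionality.
Qed.

Lemma upd_agree T (v v' : nat -> T) i x N :
  (forall m, m < N -> m <> i -> v m = v' m) -> forall m, m < N -> upd v i x m = upd v' i x m.
Proof. by move=> vv' m lt; rewrite /upd; case: eqP => // ne; exact: vv'. Qed.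

Section Skolem.

Variables (A : Type) (a0 : A).

(* A choice of x_i making tau equal to a0, as a function of the variables x_0, ..., x_N of
   tau; like every function on A, it is an operation of Omega(A). *)
Definition skolem_fun (tau : term A) (i N : nat) (args : 'I_N.+1 -> A) : A :=
  epsilon (inhabits a0) (fun y => eval (L := Omega A) (upd (tuple_env a0 args) i y) tau = a0).

Definition skolem_term (tau : term A) (i : nat) : term A :=
  @App A (@Op A (var_bound tau) (@skolem_fun tau i (var_bound tau))) (fun k => Var A (val k)).

Lemma skolem_term_Omega (tau : term A) i (v : nat -> A) y :
  eval (L := Omega A) (upd v i y) tau = a0 ->
  eval (L := Omega A) (upd v i (eval (L := Omega A) v (skolem_term tau i))) tau = a0.
Proof.
set N := var_bound tau => tau_y.
have tuple_env_v z :
    eval (L := Omega A) (upd (tuple_env a0 (fun k : 'I_N.+1 => v (val k))) i z) tau =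
    eval (L := Omega A) (upd v i z) tau.
  apply: eval_var_bound; apply: upd_agree => m lt _.
  by rewrite /tuple_env insubT //; apply: leqW.
rewrite /= /skolem_fun -/N; set P := fun z => _.
have : P (epsilon (inhabits a0) P) by apply: epsilon_spec; exists y; rewrite /P tuple_env_v.
by rewrite /P tuple_env_v.
Qed.

Lemma skolem_term_witness (M : alg A) (HV : in_variety M) (w : nat -> M) (tau : term A) i x :
  eval (upd w i x) tau = const_map M a0 ->
  eval (upd w i (eval w (skolem_term tau i))) tau = const_map M a0.
Proof.
set N := var_bound tau; set sk := skolem_term tau i => tau_x.
pose w' := upd w N.+1 x.
have w'_sk : eval w' sk = eval w sk.
  rewrite /=; congr (interp _ _ _); apply: functional_extensionality => k.
  by rewrite /w' /upd; case: eqP => // Ek; have := ltn_ord k; rewrite -/N Ek ltnn.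
have w'_tau y : eval (upd w' i y) tau = eval (upd w i y) tau.
  apply: eval_var_bound; apply: upd_agree => m lt _.
  by rewrite /w' /upd; case: eqP => // Em; move: lt; rewrite Em -/N ltnNge leqW.
have w'_x : eval w' (Var A N.+1) = x by rewrite /= /w' /upd eqxx.
(* x_(N+1) is fresh for tau; s(tau[x_(N+1)/x_i], a0, tau[sk/x_i], a0) = a0 holds in Omega(A). *)
have := @HV
  (switch_term (tsubst i (Var A N.+1) tau) (const_term a0) (tsubst i sk tau) (const_term a0))
  (const_term a0) _ w'.
rewrite eval_switch_term !eval_const_term !eval_tsubst w'_x w'_sk !w'_tau tau_x (switch_refl HV).
apply => v; rewrite eval_switch_term !eval_tsubst !eval_const_term switchM_Omega /switch.
by case: excluded_middle_informative => // E; apply: skolem_term_Omega E.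
Qed.

End Skolem.

Section FormulaTerms.

Variables (A : Type) (a0 a1 : A).

(* The value a0 codes truth and a1 falsity. *)
Fixpoint form_term (phi : form A) : term A :=
  match phi with
  | FEq t1 t2 => switch_term t1 t2 (const_term a0) (const_term a1)
  | FNot p => switch_term (form_term p) (const_term a0) (const_term a1) (const_term a0)
  | FAnd p q => switch_term (form_term p) (const_term a0) (form_term q) (const_term a1)
  | FEx i p => tsubst i (skolem_term a0 (form_term p) i) (form_term p)
  end.

Lemma sat_form_term (M : alg A) (HV : in_variety M) (disc : switch_discriminates M) :
  const_map M a0 <> const_map M a1 ->
  forall phi (w : nat -> M), sat w phi <-> eval w (form_term phi) = const_map M a0.
Proof.
move=> a01; elim=> [t1 t2|p IH|p IHp q IHq|i p IH] w; cbn [sat form_term];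
  rewrite ?eval_switch_term ?eval_const_term.
- case: (classic (eval w t1 = eval w t2)) => [->|t12]; first by rewrite (switch_refl HV).
  by rewrite disc //; split => // /esym.
- rewrite IH; case: (classic (eval w (form_term p) = const_map M a0)) => [->|Np].
    by rewrite (switch_refl HV); split => // /esym.
  by rewrite disc.
- rewrite IHp IHq; case: (classic (eval w (form_term p) = const_map M a0)) => [->|Np].
    by rewrite (switch_refl HV); split => [[]|].
  by rewrite disc //; split => [[]|/esym].
- rewrite eval_tsubst; split => [[x /IH]|sk_p]; first exact: skolem_term_witness.
  by exists (eval w (skolem_term a0 (form_term p) i)); apply/IH.
Qed.

End FormulaTerms.

Lemma elementary_embedding_of_discriminates A (M : alg A) (a0 a1 : A) :
  a0 <> a1 -> in_variety M -> nontrivial M -> switch_discriminates M ->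
  elementary_embedding (@const_map A M).
Proof.
move=> a01 HV nt disc phi v.
have Omega_var : in_variety (Omega A) by move=> t1 t2 E w; apply: E.
have const_a01 : const_map M a0 <> const_map M a1 by move/(const_map_inj HV nt).
rewrite (sat_form_term Omega_var (@switch_discriminates_Omega A) a01)
        (sat_form_term HV disc const_a01) (eval_hom _ _ (const_map_hom HV)).
by split => [->|/(const_map_inj HV nt)].
Qed.

Lemma kerP_equiv I X (f : I -> X) : is_equiv (kerP f).
Proof. by split => [i|i j|i j k] //=; rewrite /kerP => ->. Qed.

Lemma iff_equiv I (E : I -> Prop) : is_equiv (fun i j => E i <-> E j).
Proof. by split => [i|i j|i j k]; tauto. Qed.

Lemma inBA_of_iff I (F : (I -> I -> Prop) -> Prop) (E : I -> Prop) :
  F (fun i j => E i <-> E j) -> inBA F E.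
Proof.
move=> FE; case: (classic (exists i, E i)) => [[i0 Ei0]|N].
  by right; exists (fun i j => E i <-> E j); split => //; exists i0 => j; tauto.
by left => i Ei; apply: N; exists i.
Qed.

Section PartitionFilter.

Variables (I : Type) (F : (I -> I -> Prop) -> Prop).
Hypothesis PF : partition_filter F.

Lemma partition_filter_coarsen (P Q : I -> I -> Prop) :
  F P -> is_equiv Q -> (forall i j, P i j -> Q i j) -> F Q.
Proof. by case: PF => _ _ coarsen _; apply: coarsen. Qed.

Lemma kerP_const X (x : X) : F (kerP (fun _ : I => x)).
Proof. by case: (PF) => _ [P FP] _ _; apply: (partition_filter_coarsen FP (kerP_equiv _)). Qed.

Lemma kerP_pair X Y (f : I -> X) (g : I -> Y) :
  F (kerP f) -> F (kerP g) -> F (kerP (fun i => (f i, g i))).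
Proof.
case: (PF) => _ _ _ meet Ff Fg; apply: (partition_filter_coarsen (meet _ _ Ff Fg) (kerP_equiv _)).
by rewrite /kerP => i j [-> ->].
Qed.

Lemma kerP_comp X Y (f : I -> X) (g : X -> Y) : F (kerP f) -> F (kerP (g \o f)).
Proof.
by move=> Ff; apply: (partition_filter_coarsen Ff (kerP_equiv _)); rewrite /kerP => i j /= ->.
Qed.

Lemma kerP_eq_iff X (f g : I -> X) :
  F (kerP f) -> F (kerP g) -> F (fun i j => f i = g i <-> f j = g j).
Proof.
case: (PF) => _ _ _ meet Ff Fg; apply: (partition_filter_coarsen (meet _ _ Ff Fg) (iff_equiv _)).
by rewrite /kerP => i j [-> ->].
Qed.

Lemma iff_compl (E : I -> Prop) :
  F (fun i j => E i <-> E j) -> F (fun i j => ~ E i <-> ~ E j).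
Proof. by move=> FE; apply: (partition_filter_coarsen FE (iff_equiv _)) => i j; tauto. Qed.

Lemma block_of_iff (X : I -> Prop) : block_of F X -> F (fun i j => X i <-> X j).
Proof.
case: (PF) => equiv _ _ _ [P [FP [i0 XP]]]; have [_ Psym Ptrans] := equiv _ FP.
apply: (partition_filter_coarsen FP (iff_equiv _)) => i j Pij; rewrite !XP.
by split => [/Ptrans|]; [apply | move/Ptrans; apply; apply: Psym].
Qed.

Lemma inBA_and (X Y : I -> Prop) : inBA F X -> inBA F Y -> inBA F (fun i => X i /\ Y i).
Proof.
case: (classic (exists i, X i /\ Y i)) => [_|N]; last by left => i XYi; apply: N; exists i.
case=> [X0|/block_of_iff FX]; last case=> [Y0|/block_of_iff FY].
- by left => i [/X0].
- by left => i [_ /Y0].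
case: (PF) => _ _ _ meet; apply: inBA_of_iff.
by apply: (partition_filter_coarsen (meet _ _ FX FY) (iff_equiv _)) => i j [-> ->].
Qed.

(* The filter generated by Z and E is either proper, and then equal to Z by maximality, or it
   contains the empty set, which means that Z contains the complement of E. *)
Lemma BA_ultrafilter_compl (Z : (I -> Prop) -> Prop) (E : I -> Prop) :
  BA_ultrafilter F Z -> F (fun i j => E i <-> E j) -> ~ Z E -> Z (fun i => ~ E i).
Proof.
move=> [[Zin [X0 ZX0] Zup Zand] _ Zmax] FE NZE.
pose ZE Y := inBA F Y /\ exists X, Z X /\ forall i, X i -> E i -> Y i.
case: (classic (proper_filter ZE)) => [properZE|]; last first.
  case/not_all_ex_not => Y /(@imply_to_and (ZE Y)) [[_ [X [ZX XEY]]] NY].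
  apply: Zup ZX (inBA_of_iff (iff_compl FE)) _ => i Xi Ei.
  by apply: NY; exists i; exact: XEY.
have FZE : BA_filter F ZE.
  split => [Y [] //||Y Y' [_ [X [ZX XEY]]] BY' YY'|Y Y' [BY [X [ZX XEY]]] [BY' [X' [ZX' XEY']]]].
  - by exists X0; split; [exact: Zin | exists X0].
  - by split => //; exists X; split => // i Xi Ei; apply/YY'/XEY.
  split; first exact: inBA_and.
  by exists (fun i => X i /\ X' i); split; [exact: Zand | move=> i [Xi X'i] Ei; split; auto].
case: NZE; apply: (Zmax ZE FZE properZE); first by move=> X ZX; split; [exact: Zin | exists X].
by split; [exact: inBA_of_iff | exists X0].
Qed.

End PartitionFilter.

Section LimitReducedPower.

Variables (A : Type) (L : alg A) (I : Type).
Variables (F : (I -> I -> Prop) -> Prop) (Z : (I -> Prop) -> Prop) (h : OmegaF A F -> L).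
Hypothesis lrp : limit_reduced_power_pres Z h.

Let PF : partition_filter F. Proof. by case: lrp. Qed.
Let FZ : BA_filter F Z. Proof. by case: lrp. Qed.
Let h_surj : surjective h. Proof. by case: lrp. Qed.
Let h_ker f g : h f = h g <-> Z (fun i => sval f i = sval g i). Proof. by case: lrp. Qed.

Definition const_seq (a : A) : OmegaF A F := exist _ (fun _ => a) (kerP_const PF a).

Lemma lrp_switch (f g u v W : OmegaF A F) :
  (forall i, sval W i = switch (sval f i) (sval g i) (sval u i) (sval v i)) ->
  h W = switchM (h f) (h g) (h u) (h v).
Proof. by case: lrp => _ _ _ _ h_interp W_sw; rewrite /switchM -args4_map; apply: h_interp. Qed.

Lemma lrp_proper_filter : nontrivial L -> proper_filter Z.
Proof.
move=> [x [y xy]] X ZX; apply: NNPP => X0; apply: xy.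
have [f <-] := h_surj x; have [g <-] := h_surj y; apply/h_ker.
case: FZ => _ _ Zup _; apply: Zup ZX _ _; last by move=> i Xi; case: X0; exists i.
exact: (inBA_of_iff (kerP_eq_iff PF (svalP f) (svalP g))).
Qed.

(* The indicator g of X (a0 on X, a1 off X) is identified in L either with the constant a0,
   so that X lies in Z, or, by the discriminator, with the constant a1, so that the complement of
   X lies in Z and hence in Z'. *)
Lemma lrp_ultrafilter_of_discriminates (a0 a1 : A) :
  a0 <> a1 -> nontrivial L -> switch_discriminates L -> BA_ultrafilter F Z.
Proof.
move=> a01 nt disc; split; [exact: FZ | exact: lrp_proper_filter |].
move=> Z' [Z'in _ _ Z'and] properZ' ZZ' X Z'X; have [_ _ Zup _] := FZ.
have FX : F (fun i j => X i <-> X j).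
  case: (Z'in _ Z'X) => [X0|]; last exact: block_of_iff.
  by have [i Xi] := properZ' _ Z'X; case: (X0 i).
pose ind i := if excluded_middle_informative (X i) then a0 else a1.
have ind_in : F (kerP ind).
  apply: (partition_filter_coarsen PF FX (kerP_equiv _)) => i j Xij; rewrite /kerP /ind.
  by case: excluded_middle_informative => Xi; case: excluded_middle_informative => Xj //=; tauto.
pose g : OmegaF A F := exist _ ind ind_in.
case: (classic (h (const_seq a0) = h g)) => [/h_ker Zg|g_a0].
  apply: Zup Zg (Z'in _ Z'X) _ => i /=; rewrite /ind.
  by case: excluded_middle_informative.
have /h_ker/ZZ' Z'g : h g = h (const_seq a1).
  rewrite -(disc _ _ (h (const_seq a0)) (h (const_seq a1)) g_a0).
  apply: lrp_switch => i /=; rewrite /ind.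
  by case: excluded_middle_informative => _ /=; case_switch.
have [i [Xi]] := properZ' _ (Z'and _ _ Z'X Z'g).
by rewrite /= /ind; case: excluded_middle_informative.
Qed.

Lemma lrp_discriminates_of_ultrafilter : BA_ultrafilter F Z -> switch_discriminates L.
Proof.
move=> Zultra p q u v.
have [f <-] := h_surj p; have [g <-] := h_surj q.
have [u' <-] := h_surj u; have [v' <-] := h_surj v => fg.
have W_in := kerP_comp PF (fun p => switch p.1.1.1 p.1.1.2 p.1.2 p.2)
  (kerP_pair PF (kerP_pair PF (kerP_pair PF (svalP f) (svalP g)) (svalP u')) (svalP v')).
pose W : OmegaF A F := exist _ _ W_in.
rewrite -(@lrp_switch f g u' v' W) //.
have Z_fg : Z (fun i => sval f i <> sval g i).
  apply: (BA_ultrafilter_compl (E := fun i => sval f i = sval g i) PF Zultra).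
    exact: (kerP_eq_iff PF (svalP f) (svalP g)).
  by move/h_ker.
have [_ _ Zup _] := FZ; apply/h_ker; apply: Zup Z_fg _ _ => [|i f_g /=]; last by case_switch.
exact: (inBA_of_iff (kerP_eq_iff PF W_in (svalP v'))).
Qed.

End LimitReducedPower.

Lemma infinite_type_distinct A : infinite_type A -> exists a0 a1 : A, a0 <> a1.
Proof.
move=> Ainf; have [a0 _] := Ainf nil; have [a1 a1_new] := Ainf (a0 :: nil).
by exists a0, a1 => a01; apply: a1_new; left.
Qed.

Theorem mainTheorem3 (A : Type) (L : alg A) :
  infinite_type A -> in_variety L -> nontrivial L ->
  ((simple_alg L <-> subdirectly_irreducible L) /\
   (subdirectly_irreducible L <-> directly_indecomposable L) /\
   (directly_indecomposable L <-> elementary_embedding (@const_map A L))) /\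
  (forall (I : Type) (F : (I -> I -> Prop) -> Prop) (Z : (I -> Prop) -> Prop)
          (h : OmegaF A F -> L),
     limit_reduced_power_pres Z h ->
     (simple_alg L <-> BA_ultrafilter F Z)).
Proof.
move=> /infinite_type_distinct [a0 [a1 a01]] HV nt.
have simple_SI := @simple_subdirectly_irreducible A L.
have SI_DI := @subdirectly_irreducible_directly_indecomposable A L.
have DI_disc := discriminates_of_directly_indecomposable HV a01.
have disc_simple := simple_of_discriminates HV nt.
have disc_EE := elementary_embedding_of_discriminates a01 HV nt.
have EE_disc := @discriminates_of_elementary_embedding A L a0.
split.
  split; first by split => [/simple_SI|/SI_DI/DI_disc/disc_simple].
  split; first by split => [/SI_DI|/DI_disc/disc_simple/simple_SI].
  by split => [/DI_disc/disc_EE|/EE_disc/disc_simple/simple_SI/SI_DI].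
move=> I F Z h lrp; split => [L_simple|Z_ultra].
  have L_disc := discriminates_of_simple HV a01 L_simple.
  exact: (lrp_ultrafilter_of_discriminates lrp a01 nt L_disc).
have L_disc := lrp_discriminates_of_ultrafilter lrp Z_ultra.
exact: (disc_simple L_disc).
Qed.
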